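(* Let $V$ be a finite-dimensional vector space over a field of characteristic $\neq2$ and let $\mathcal S\subseteq V$. Let $\mathcal H'\neq\mathcal H''$ be two distinct linear hyperplanes of $V$ such that $\mathcal S'=\mathcal S\cap\mathcal H'$ is perfect in $\mathcal H'$ and $\mathcal S''=\mathcal S\cap\mathcal H''$ is perfect in $\mathcal H''$. Suppose moreover that $\mathcal S\setminus(\mathcal S'\cup\mathcal S'')$ is non-empty. Then $\mathcal S$ is perfect in $V$.
   Context: A subset $\mathcal P$ of a vector space $W$ of finite dimension $n$ over a field of characteristic $\neq2$ is perfect (in $W$) if $\{v\otimes v\}_{v\in\mathcal P}$ spans the $\binom{n+1}{2}$-dimensional space of all symmetric tensors in $W\otimes W$. *)

(* V is modelled as the row space 'rV[F]_n; a subspace W of V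
   is represented (mxalgebra style) by a square matrix whose row space is W.
   V (x) V is modelled as 'M[F]_n via  u (x) v  |->  u^T *m v. *)
From HB Require Import structures.
From mathcomp Require Import all_boot all_order all_algebra.
Set Implicit Arguments. Unset Strict Implicit. Unset Printing Implicit Defensive.
Import GRing.Theory.
Local Open Scope ring_scope.

Definition sqtensor (F : fieldType) (n : nat) (v : 'rV[F]_n) : 'M[F]_n :=
  v^T *m v.

(* symmetric tensors of W (x) W, inside V (x) V: symmetric matrices whose rows
   and columns lie in W *)
Definition sym_tensor (F : fieldType) (n : nat) (W : 'M[F]_n) (M : 'M[F]_n) : bool :=
  [&& M^T == M, (M <= W)%MS & (M^T <= W)%MS].

Definition perfect (F : fieldType) (n : nat) (P : pred 'rV[F]_n) (W : 'M[F]_n) : Prop :=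
  (forall v, P v -> (v <= W)%MS) /\
  forall M : 'M[F]_n, sym_tensor W M ->
    exists (k : nat) (v : 'I_k -> 'rV[F]_n) (c : 'I_k -> F),
      (forall i, P (v i)) /\ M = \sum_(i < k) c i *: sqtensor (v i).

Definition hyperplane (F : fieldType) (n : nat) (H : 'M[F]_n) : Prop :=
  (\rank H).+1 = n.

(* A hyperplane H_i is the kernel of a linear form f_i.  Pick v in S outside both
   hyperplanes.  A symmetric M becomes, after subtracting a multiple of v (x) v,
   a symmetric M0 with f1^T M0 f2 = 0.  Choosing u in H2 with f1(u) = 1, the
   projection P = 1 - f1 u onto H1 fixes f2, so A = P^T M0 P is a symmetric
   tensor of H1 and B = M0 - A one of H2; both are spanned by the perfect sets. *)
From HB Require Import structures.
From mathcomp Require Import all_boot all_order all_algebra.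
From mathcomp Require Import zify.
Import GRing.Theory.
Local Open Scope ring_scope.

Section PerfectSets.
Set Implicit Arguments.
Unset Strict Implicit.
Variables (F : fieldType) (n : nat).
Implicit Types (S : pred 'rV[F]_n) (f : 'cV[F]_n) (u v : 'rV[F]_n) (M : 'M[F]_n).

Definition sqtensor_span S M : Prop :=
  exists (k : nat) (v : 'I_k -> 'rV[F]_n) (c : 'I_k -> F),
    (forall i, S (v i)) /\ M = \sum_(i < k) c i *: sqtensor (v i).

Lemma sqtensor_spanD S M1 M2 :
  sqtensor_span S M1 -> sqtensor_span S M2 -> sqtensor_span S (M1 + M2).
Proof.
move=> [k1 [v1 [c1 [Sv1 ->]]]] [k2 [v2 [c2 [Sv2 ->]]]].
exists (k1 + k2)%N,
  (fun i => match split i with inl j => v1 j | inr j => v2 j end),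
  (fun i => match split i with inl j => c1 j | inr j => c2 j end).
split; first by move=> i; case: (split i).
rewrite big_split_ord /=; congr (_ + _); apply: eq_bigr => i _.
  by rewrite (unsplitK (inl _ i)).
by rewrite (unsplitK (inr _ i)).
Qed.

Lemma sqtensor_spanZ S v c : S v -> sqtensor_span S (c *: sqtensor v).
Proof.
move=> Sv; exists 1%N, (fun _ => v), (fun _ => c); split => //.
by rewrite big_ord1.
Qed.

Lemma perfect_sqtensor_span S (W : 'M[F]_n) M :
  perfect [pred v | S v && (v <= W)%MS] W -> sym_tensor W M -> sqtensor_span S M.
Proof.
move=> [_ spanW] /spanW [k [v [c [Sv ->]]]].
by exists k, v, c; split => // i; case/andP: (Sv i).
Qed.

Lemma mx11_eq0 (x : 'M[F]_1) : (x == 0) = (x 0 0 == 0).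
Proof.
rewrite {1}[x]mx11_scalar; apply/eqP/eqP => [/matrixP/(_ 0 0)|->].
  by rewrite !mxE.
by apply/matrixP => i j; rewrite !mxE mul0rn.
Qed.

Lemma mulmx_const_mx1_eq0 r m (X : 'M[F]_(m, r)) : r = 1%N ->
  (X *m (const_mx 1 : 'M[F]_(r, 1)) == 0) = (X == 0).
Proof.
move=> r1; subst r; congr (_ == 0); apply/matrixP => i j.
by rewrite !mxE big_ord1 mxE mulr1 (ord1 j).
Qed.

Lemma hyperplane_kernel (H : 'M[F]_n) : hyperplane H ->
  exists f : 'cV[F]_n, forall m (M : 'M[F]_(m, n)), (M <= H)%MS = (M *m f == 0).
Proof.
move=> hypH.
have rk1 : \rank (cokermx H) = 1%N.
  by rewrite mxrank_coker; move: hypH; rewrite /hyperplane; lia.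
exists (col_base (cokermx H) *m const_mx 1) => m M.
rewrite submxE -{1}(mulmx_base (cokermx H)) mulmxA mulmx_free_eq0 ?row_base_free //.
by rewrite mulmxA mulmx_const_mx1_eq0.
Qed.

Lemma hyperplane_sub_eqmx (H1 H2 : 'M[F]_n) :
  hyperplane H1 -> hyperplane H2 -> (H2 <= H1)%MS -> (H1 == H2)%MS.
Proof.
rewrite /hyperplane => rk1 rk2 sub21; rewrite sub21 andbT.
by rewrite -(mxrank_leqif_sup sub21).2; apply/eqP/succn_inj; rewrite rk1 rk2.
Qed.

Lemma exists_sub_mul_eq1 m (X : 'M[F]_(m, n)) (f : 'cV[F]_n) :
  X *m f != 0 -> exists2 u : 'rV[F]_n, (u <= X)%MS & u *m f = 1%:M.
Proof.
move=> Xf0.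
have [i] : exists i, row i X *m f != 0.
  apply/existsP; move: Xf0; apply: contraR; rewrite negb_exists => /forallP Xf.
  by apply/eqP/row_matrixP => i; rewrite row_mul row0; apply/eqP/negPn/Xf.
move=> /[!mx11_eq0] a0; exists (((row i X *m f) 0 0)^-1 *: row i X).
  exact/scalemx_sub/row_sub.
by rewrite -scalemxAl {2}[row i X *m f]mx11_scalar scale_scalar_mx mulVf.
Qed.

Lemma trmx_sqtensor v : (sqtensor v)^T = sqtensor v.
Proof. by rewrite /sqtensor trmx_mul trmxK. Qed.

Lemma sqtensor_form f1 f2 v :
  f1^T *m sqtensor v *m f2 = (v *m f1)^T *m (v *m f2).
Proof. by rewrite /sqtensor trmx_mul !mulmxA. Qed.

Lemma exists_sqtensor_correction f1 f2 v M :
  v *m f1 != 0 -> v *m f2 != 0 ->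
  exists c, f1^T *m (M - c *: sqtensor v) *m f2 = 0.
Proof.
rewrite !mx11_eq0; set b1 := (v *m f1) 0 0; set b2 := (v *m f2) 0 0 => b1_0 b2_0.
exists ((f1^T *m M *m f2) 0 0 / (b1 * b2)).
rewrite mulmxBr mulmxBl -scalemxAr -scalemxAl sqtensor_form.
rewrite [v *m f1]mx11_scalar [v *m f2]mx11_scalar -/b1 -/b2 tr_scalar_mx.
rewrite -scalar_mxM scale_scalar_mx mulfVK ?mulf_neq0 // -mx11_scalar.
by rewrite subrr.
Qed.

Lemma sym_split_kernels f1 f2 u M :
  u *m f1 = 1%:M -> u *m f2 = 0 -> M^T = M -> f1^T *m M *m f2 = 0 ->
  exists A B, [/\ M = A + B, A^T = A, A *m f1 = 0, B^T = B & B *m f2 = 0].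
Proof.
move=> uf1 uf2 MT Mf12.
pose P := 1%:M - f1 *m u.
have Pf1 : P *m f1 = 0 by rewrite mulmxBl mul1mx -mulmxA uf1 mulmx1 subrr.
have Pf2 : P *m f2 = f2 by rewrite mulmxBl mul1mx -mulmxA uf2 mulmx0 subr0.
pose A := P^T *m M *m P.
have AT : A^T = A by rewrite !trmx_mul trmxK MT mulmxA.
exists A, (M - A); split=> //; first by rewrite addrC subrK.
- by rewrite -!mulmxA Pf1 !mulmx0.
- by rewrite linearB /= AT MT.
(* (1 - P^T) M f2 = u^T f1^T M f2 = 0 *)
have P'T : 1%:M - P^T = u^T *m f1^T by rewrite linearB /= trmx1 trmx_mul subKr.
rewrite mulmxBl -!mulmxA Pf2 -{1}[M *m f2]mul1mx -mulmxBl P'T.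
by rewrite -mulmxA [f1^T *m _]mulmxA Mf12 mulmx0.
Qed.

Lemma sym_tensor_kernel (H : 'M[F]_n) f M :
  (forall m (X : 'M[F]_(m, n)), (X <= H)%MS = (X *m f == 0)) ->
  M^T = M -> M *m f = 0 -> sym_tensor H M.
Proof. by move=> kerH MT Mf; rewrite /sym_tensor MT eqxx kerH Mf eqxx. Qed.

End PerfectSets.

Theorem proposition2p3 (F : fieldType) (n : nat) (S : pred 'rV[F]_n)
    (H1 H2 : 'M[F]_n) :
  (2%:R : F) != 0 ->
  hyperplane H1 -> hyperplane H2 -> ~~ (H1 == H2)%MS ->
  perfect [pred v | S v && (v <= H1)%MS] H1 ->
  perfect [pred v | S v && (v <= H2)%MS] H2 ->
  (exists v, [/\ S v, ~~ (v <= H1)%MS & ~~ (v <= H2)%MS]) ->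
  perfect S 1%:M.
Proof.
move=> _ hypH1 hypH2 H12 perfH1 perfH2 [v [Sv vH1 vH2]].
have [f1 kerH1] := hyperplane_kernel hypH1.
have [f2 kerH2] := hyperplane_kernel hypH2.
have [u uH2 uf1] : exists2 u, (u <= H2)%MS & u *m f1 = 1%:M.
  apply: exists_sub_mul_eq1; rewrite -kerH1.
  by apply: contra H12; apply: hyperplane_sub_eqmx.
have uf2 : u *m f2 = 0 by apply/eqP; rewrite -kerH2.
split=> [w _|M /and3P[/eqP MT _ _]]; first exact: submx1.
have vf1 : v *m f1 != 0 by rewrite -kerH1.
have vf2 : v *m f2 != 0 by rewrite -kerH2.
have [c Mc12] := exists_sqtensor_correction M vf1 vf2.
have McT : (M - c *: sqtensor v)^T = M - c *: sqtensor v.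
  by rewrite linearB /= linearZ /= MT trmx_sqtensor.
have [A [B [McAB AT Af1 BT Bf2]]] := sym_split_kernels uf1 uf2 McT Mc12.
rewrite -[M](subrK (c *: sqtensor v)) McAB.
apply: sqtensor_spanD; last exact: sqtensor_spanZ.
apply: sqtensor_spanD.
  exact: perfect_sqtensor_span perfH1 (sym_tensor_kernel kerH1 AT Af1).
exact: perfect_sqtensor_span perfH2 (sym_tensor_kernel kerH2 BT Bf2).
Qed.
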